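(* Let $H=(\mathcal{V},\mathcal{E})$ be a hypergraph. Let $\chi_{cf}(H)$ be the number of non-zero colours used in an optimal conflict-free colouring of $H$, and let $\chi_{min}=\min_{t}\chi(G_{R,t})$ be the minimum chromatic number over all co-occurrence graphs $G_{R,t}$ of $H$ (over all representative functions $t$, with $R=t(\mathcal{E})$). Then $\chi_{cf}(H)=\chi_{min}$.
   Context: A hypergraph $H=(\mathcal{V},\mathcal{E})$ has a finite vertex set $\mathcal{V}$ and a family $\mathcal{E}$ of nonempty subsets of $\mathcal{V}$ (hyperedges). A conflict-free colouring of $H$ is a function $C:\mathcal{V}\to\mathbb{N}=\{0,1,2,\dots\}$ such that for every hyperedge $E\in\mathcal{E}$ there is a colour $j\geq 1$ with $|E\cap C^{-1}(j)|=1$; colour $0$ is a special ''uncoloured'' colour and is not counted. $\chi_{cf}(H)$ is the minimum number of non-zero colours used by a conflict-free colouring. A representative function is a map $t:\mathcal{E}\to\mathcal{V}$ with $t(E)\in E$ for every $E$; $R=t(\mathcal{E})$ is its image (the set of representatives). The co-occurrence graph $G_{R,t}$ is the simple graph with vertex set $R$, in which distinct $u,v\in R$ are adjacent if and only if there is a hyperedge $E\in\mathcal{E}$ with $u,v\in E$ and $t(E)\in\{u,v\}$. $\chi(G)$ denotes the chromatic number of a graph $G$. *)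

From mathcomp Require Import all_boot.
From Stdlib Require Import ClassicalEpsilon.
Set Implicit Arguments. Unset Strict Implicit. Unset Printing Implicit Defensive.

Definition pb (P : Prop) : bool := if excluded_middle_informative P then true else false.
Lemma pbP (P : Prop) : reflect P (pb P).
Proof. by rewrite /pb; case: excluded_middle_informative => h; constructor. Qed.

(* A hypergraph H = (V, E): finite vertex type V, and a finite family of
   hyperedges indexed by a finite type I (E : I -> {set V}); repetitions
   allowed. *)

Section Hyp.
Variables (V I : finType) (E : I -> {set V}).

(* Conflict-free colouring: colour 0 is "uncoloured" and not counted. *)
Definition conflict_free (C : V -> nat) : Prop :=
  forall i : I, exists j : nat, 1 <= j /\ #|E i :&: [set v | C v == j]| = 1.

Definition nb_nonzero_colours (C : V -> nat) : nat :=
  size (undup [seq C v | v <- enum V & C v != 0]).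

Definition cf_with (k : nat) : Prop :=
  exists C : V -> nat, conflict_free C /\ nb_nonzero_colours C = k.

Lemma cf_with_exists (hE : forall i, E i != set0) : exists k, cf_with k.
Proof.
exists (nb_nonzero_colours (fun v => (enum_rank v).+1)).
exists (fun v => (enum_rank v).+1); split => // i.
have /set0Pn [x xE] := hE i.
exists (enum_rank x).+1; split => //.
suff -> : E i :&: [set v | (enum_rank v).+1 == (enum_rank x).+1] = [set x]
  by rewrite cards1.
apply/setP => y; rewrite !inE eqSS.
apply/andP/eqP => [[_ /eqP e]|->]; first exact: enum_rank_inj (val_inj e).
by split.
Qed.

Definition chi_cf (hE : forall i, E i != set0) : nat := ex_minn (let: ex_intro k h := cf_with_exists hE in
    ex_intro (fun k => pb (cf_with k)) k (introT (pbP _) h)).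

Definition representative (t : I -> V) : Prop := forall i, t i \in E i.

Definition reps (t : I -> V) : {set V} := [set t i | i : I].

Definition cooc_adj (t : I -> V) : rel V :=
  fun u v => [&& u != v, u \in reps t, v \in reps t &
              [exists i, [&& u \in E i, v \in E i & (t i == u) || (t i == v)]]].

End Hyp.

Section Chrom.
Variables (V : finType) (R : {set V}) (adj : rel V).

Definition proper_colouring (k : nat) (f : V -> nat) : Prop :=
  (forall v, v \in R -> f v < k) /\
  (forall u v, u \in R -> v \in R -> adj u v -> f u != f v).

Definition colourable (k : nat) : Prop := exists f, proper_colouring k f.

Lemma colourable_exists (irr : forall v, ~~ adj v v) : exists k, colourable k.
Proof.
exists #|V|, (fun v => nat_of_ord (enum_rank v)); split => [v _|u v _ _ huv].
  exact: ltn_ord.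
apply/negP => /eqP /val_inj /enum_rank_inj euv.
by move: huv; rewrite euv (negbTE (irr v)).
Qed.

Definition chromatic (irr : forall v, ~~ adj v v) : nat :=
  ex_minn (let: ex_intro k h := colourable_exists irr in
    ex_intro (fun k => pb (colourable k)) k (introT (pbP _) h)).
End Chrom.

Lemma cooc_irr (V I : finType) (E : I -> {set V}) (t : I -> V) :
  forall v, ~~ cooc_adj E t v v.
Proof. by move=> v; rewrite /cooc_adj eqxx. Qed.

Definition chi_cooc (V I : finType) (E : I -> {set V}) (t : I -> V) : nat :=
  chromatic (reps t) (cooc_irr E t).

Definition chi_min_with (V I : finType) (E : I -> {set V}) (k : nat) : Prop :=
  exists t : I -> V, representative E t /\ chi_cooc E t = k.

Lemma chi_min_exists (V I : finType) (E : I -> {set V})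
  (hE : forall i, E i != set0) : exists k, chi_min_with E k.
Proof.
pose t i := xchoose (set0Pn _ (hE i)).
exists (chi_cooc E t), t; split => // i.
exact: (xchooseP (set0Pn _ (hE i))).
Qed.

Definition chi_min (V I : finType) (E : I -> {set V})
  (hE : forall i, E i != set0) : nat := ex_minn (let: ex_intro k h := chi_min_exists hE in
    ex_intro (fun k => pb (chi_min_with E k)) k (introT (pbP _) h)).

(** A conflict-free colouring [C] selects in every hyperedge [E i] a vertex
    [t i] whose non-zero colour occurs nowhere else in [E i]; two vertices
    adjacent in the co-occurrence graph of [t] share a hyperedge in which one of
    them is the selected vertex, so [C] properly colours that graph with its
    non-zero colours.  Conversely, a proper [k]-colouring [f] of the
    co-occurrence graph of a representative function [t], shifted to [f + 1] on
    representatives and [0] elsewhere, is conflict-free: in [E i] the colour of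
    [t i] can only be shared by a representative adjacent to [t i]. *)
From mathcomp Require Import all_boot.

Set Implicit Arguments.
Unset Strict Implicit.
Unset Printing Implicit Defensive.

Lemma pb_ex_minnP (P : nat -> Prop) (ex : exists k, P k) :
  let m := ex_minn (let: ex_intro k h := ex in
             ex_intro (fun k => pb (P k)) k (introT (pbP _) h)) in
  P m /\ forall k, P k -> m <= k.
Proof.
case: ex => k0 h0 /=; case: ex_minnP => m /pbP Pm m_min.
by split=> // k /pbP; apply: m_min.
Qed.

Lemma chromaticP (V : finType) (R : {set V}) (adj : rel V)
    (irr : forall v, ~~ adj v v) :
  colourable R adj (chromatic R irr) /\
  forall k, colourable R adj k -> chromatic R irr <= k.
Proof. exact: pb_ex_minnP. Qed.

Lemma nb_nonzero_colours_leq (V : finType) (C : V -> nat) k :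
  (forall v, C v <= k) -> nb_nonzero_colours C <= k.
Proof.
move=> C_le; rewrite -(size_iota 1 k) uniq_leq_size ?undup_uniq // => c.
rewrite mem_undup => /mapP [v]; rewrite mem_filter => /andP [Cv_neq0 _] ->.
by rewrite mem_iota add1n ltnS lt0n Cv_neq0 C_le.
Qed.

Lemma colourable_nb_nonzero_colours (V : finType) (R : {set V}) (adj : rel V)
    (C : V -> nat) :
  {in R, forall v, C v != 0} ->
  {in R &, forall u v, adj u v -> C u != C v} ->
  colourable R adj (nb_nonzero_colours C).
Proof.
rewrite /nb_nonzero_colours => C_neq0 C_proper; set L := undup _.
have C_in_L v : v \in R -> C v \in L.
  by move=> vR; rewrite mem_undup map_f // mem_filter C_neq0 ?mem_enum.
exists (fun v => index (C v) L); split=> [v vR | u v uR vR adj_uv].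
  by rewrite index_mem C_in_L.
apply: contra (C_proper u v uR vR adj_uv) => /eqP same_index.
by rewrite -(nth_index 0 (C_in_L u uR)) same_index nth_index ?C_in_L.
Qed.

Section CoOccurrence.
Variables (V I : finType) (E : I -> {set V}).

Lemma chi_cfP (hE : forall i, E i != set0) :
  cf_with E (chi_cf hE) /\ forall k, cf_with E k -> chi_cf hE <= k.
Proof. exact: pb_ex_minnP. Qed.

Lemma chi_minP (hE : forall i, E i != set0) :
  chi_min_with E (chi_min hE) /\ forall k, chi_min_with E k -> chi_min hE <= k.
Proof. exact: pb_ex_minnP. Qed.

Lemma rep_in_reps (t : I -> V) i : t i \in reps t.
Proof. exact: imset_f. Qed.

Definition unique_colour_in (C : V -> nat) (A : {set V}) (v : V) : bool :=
  [&& v \in A, C v != 0 & [forall w in A, (C w == C v) ==> (w == v)]].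

Lemma conflict_free_unique_colour (C : V -> nat) :
  conflict_free E C -> forall i, exists v, unique_colour_in C (E i) v.
Proof.
move=> cfC i; have [j [j_gt0 /eqP/cards1P [x Ei_j]]] := cfC i.
have in_Ei_j w : (w \in E i) && (C w == j) = (w == x).
  by rewrite -in_set1 -Ei_j !inE.
have /andP [xE /eqP Cx] : (x \in E i) && (C x == j) by rewrite in_Ei_j.
exists x; rewrite /unique_colour_in xE Cx -lt0n j_gt0.
by apply/forall_inP => w wE; apply/implyP; rewrite -in_Ei_j wE.
Qed.

Lemma cooc_adj_colour_neq (C : V -> nat) (t : I -> V) :
  (forall i, unique_colour_in C (E i) (t i)) ->
  forall u v, cooc_adj E t u v -> C u != C v.
Proof.
move=> t_unique u v /and4P [u_neq_v _ _ /existsP [i /and3P [uE vE ti_uv]]].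
have /and3P [_ _ /forall_inP ti_only] := t_unique i.
apply: contra u_neq_v => /eqP Cuv.
case/orP: ti_uv => /eqP ti_eq; subst.
  by rewrite eq_sym; apply: (implyP (ti_only v vE)); rewrite Cuv.
by apply: (implyP (ti_only u uE)); rewrite Cuv.
Qed.

Lemma chi_cooc_leq_conflict_free (C : V -> nat) :
  conflict_free E C ->
  exists2 t, representative E t & chi_cooc E t <= nb_nonzero_colours C.
Proof.
move=> cfC; pose t i := xchoose (conflict_free_unique_colour cfC i).
have t_unique i : unique_colour_in C (E i) (t i) by apply: xchooseP.
exists t => [i | ]; first by case/and3P: (t_unique i).
apply: (chromaticP _ _).2; apply: colourable_nb_nonzero_colours.
  by move=> _ /imsetP [i _ ->]; case/and3P: (t_unique i).
by move=> u v _ _; apply: cooc_adj_colour_neq.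
Qed.

Lemma conflict_free_of_cooc_colouring (t : I -> V) k (f : V -> nat) :
  representative E t -> proper_colouring (reps t) (cooc_adj E t) k f ->
  conflict_free E (fun v => if v \in reps t then (f v).+1 else 0).
Proof.
move=> t_rep [_ f_proper] i; exists (f (t i)).+1; split=> //.
apply/eqP/cards1P; exists (t i); apply/setP => w; rewrite !inE.
apply/andP/eqP => [[wE] | ->]; last by rewrite t_rep rep_in_reps.
case: ifP => // wR /eqP [fw]; apply/eqP/negPn/negP => w_neq_ti.
have adj_w_ti : cooc_adj E t w (t i).
  rewrite /cooc_adj w_neq_ti wR rep_in_reps; apply/existsP; exists i.
  by rewrite wE t_rep eqxx orbT.
by move: (f_proper _ _ wR (rep_in_reps t i) adj_w_ti); rewrite fw eqxx.
Qed.

Lemma conflict_free_leq_chi_cooc (t : I -> V) :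
  representative E t ->
  exists2 C, conflict_free E C & nb_nonzero_colours C <= chi_cooc E t.
Proof.
move=> t_rep; have [f f_proper] := (chromaticP (reps t) (cooc_irr E t)).1.
exists (fun v => if v \in reps t then (f v).+1 else 0).
  exact: conflict_free_of_cooc_colouring f_proper.
apply: nb_nonzero_colours_leq => v; case: ifP => // vR.
exact: f_proper.1.
Qed.

End CoOccurrence.

Theorem theorem1 (V I : finType) (E : I -> {set V})
  (hE : forall i, E i != set0) :
  chi_cf hE = chi_min hE.
Proof.
have [[C [cfC <-]] chi_cf_min] := chi_cfP hE.
have [[t [t_rep <-]] chi_min_min] := chi_minP hE.
apply/eqP; rewrite eqn_leq; apply/andP; split.
- have [C' cfC' C'_le] := conflict_free_leq_chi_cooc t_rep.
  exact: leq_trans (chi_cf_min _ (ex_intro _ C' (conj cfC' erefl))) C'_le.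
- have [t' t'_rep t'_le] := chi_cooc_leq_conflict_free cfC.
  exact: leq_trans (chi_min_min _ (ex_intro _ t' (conj t'_rep erefl))) t'_le.
Qed.
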